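(* Consider the uncertain system $x^j_{t+1}=Ax^j_t+Bu^j_t+w^j_t$ at iteration $j\ge 1$ in closed loop with the LMPC input $u^j_t=\pi^{j,*}_{t|t}(x^j_t)$ (both described in the context). Suppose $x^j_0\in\mathcal{C}^j$. Then for every time $t\ge 0$ and every disturbance realization with $w^j_t\in\mathcal{W}$, the optimal control problem $C^{\mathrm{LMPC},j}_{t\to t+N}(x^j_t,N^j_t)$ is feasible for some $N^j_t\in\{0,\dots,N\}$, and the closed-loop system satisfies $x^j_t\in\mathcal{X}$ and $u^j_t\in\mathcal{U}$ for all $t\ge 0$.
   Context: System: $x_{t+1}=Ax_t+Bu_t+w_t$ with known $A\in\mathbb{R}^{n\times n}$, $B\in\mathbb{R}^{n\times d}$. The disturbances take values in $\mathcal{W}\subset\mathbb{R}^n$, a compact polytope containing the origin with vertices $v_w^1,\dots,v_w^l$. Constraints: $x_t\in\mathcal{X}$, $u_t\in\mathcal{U}$, with $\mathcal{X}\subset\mathbb{R}^n$, $\mathcal{U}\subset\mathbb{R}^d$ convex, compact, containing the origin. A gain $K$ and a polyhedron $\mathcal{O}\subset\mathcal{X}$ with vertices $v_o^1,\dots,v_o^m$ are given such that $x\in\mathcal{O}\Rightarrow (A+BK)x+w\in\mathcal{O}$ for all $w\in\mathcal{W}$; $K\mathcal{O}=\{Kx:x\in\mathcal{O}\}$. Write $|x|_{\mathcal{S}}=\inf_{y\in\mathcal{S}}\|x-y\|_2$. The stage cost $h:\mathbb{R}^n\times\mathbb{R}^d\to\mathbb{R}$ is continuous and jointly convex, and there are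 $\mathcal{K}_\infty$ functions with $\alpha^l_x(|x|_\mathcal{O})\le h(x,0)\le\alpha^u_x(|x|_\mathcal{O})$ and $\alpha^l_u(|u|_{K\mathcal{O}})\le h(0,u)\le\alpha^u_u(|u|_{K\mathcal{O}})$ for all $x,u$. A horizon $N\ge1$ is fixed. Data-based construction. Set $\mathcal{CS}^0=\mathcal{O}$, $\mathbf{X}^0=[v_o^1,\dots,v_o^m]$, $\mathbf{U}^0=[Kv_o^1,\dots,Kv_o^m]$, $\mathbf{J}^0=[0,\dots,0]$, $Q^0\equiv0$ on $\mathcal{O}$. For each previous iteration $i\in\{1,\dots,j-1\}$ there are a duration $T^i$, a stored closed-loop trajectory $x^i_0,\dots,x^i_{T^i}$ and, for each $t\in\{0,\dots,T^i\}$, an $N$-step policy $\boldsymbol{\pi}^{i,*}_t=[\pi^{i,*}_{t|t},\dots,\pi^{i,*}_{t+N-1|t}]$ (maps $\mathbb{R}^n\to\mathbb{R}^d$) with $x^i_{t+1}=Ax^i_t+B\pi^{i,*}_{t|t}(x^i_t)+w^i_t$, such that (standing assumption) the predicted system $x_{s+1|t}=Ax_{s|t}+B\pi^{i,*}_{s|t}(x_{s|t})+w_{s|t}$, $s=t,\dots,t+N-1$, $x_{t|t}=x^i_t$, satisfies $x_{s|t}\in\mathcal{X}$, $\pi^{i,*}_{s|t}(x_{s|t})\in\mathcal{U}$ and $x_{t+N|t}\in\mathcal{CS}^{i-1}$ for all disturbances in $\mathcal{W}$. Reachable sets: $\mathcal{R}^i_{t\to t}=\{x^i_t\}$, $\mathcal{R}^i_{t\to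 s+1}=\{Ax+B\pi^{i,*}_{s|t}(x)+w: x\in\mathcal{R}^i_{t\to s},w\in\mathcal{W}\}$. Then $\mathcal{CS}^i=\mathrm{Conv}\big(\bigcup_{t=0}^{T^i}\bigcup_{s=t}^{t+N}\mathcal{R}^i_{t\to s}\cup\mathcal{CS}^{i-1}\big)$. For $s\in\{t,\dots,t+N\}$ let $v^{i,1}_{s|t},\dots,v^{i,l^{s-t}}_{s|t}$ be the vertices of $\mathcal{R}^i_{t\to s}$. Define costs-to-go backwards: $J^i_{t+N|t}(v^{i,r}_{t+N|t})=Q^{i-1}(v^{i,r}_{t+N|t})$ and, for $s=t+N-1,\dots,t$ and $v=v^{i,r}_{s|t}$, $J^i_{s|t}(v)=\min_{\gamma\ge0}\, h(v,\pi^{i,*}_{s|t}(v))+\sum_q\gamma_qJ^i_{s+1|t}(v^{i,q}_{s+1|t})$ s.t. $\sum_q\gamma_qv^{i,q}_{s+1|t}=Av+B\pi^{i,*}_{s|t}(v)$, $\sum_q\gamma_q=1$. The matrices $\mathbf{X}^i,\mathbf{U}^i$ and row vector $\mathbf{J}^i$ are obtained from $\mathbf{X}^{i-1},\mathbf{U}^{i-1},\mathbf{J}^{i-1}$ by appending, for all $t\in\{0,\dots,T^i\}$, $s\in\{t,\dots,t+N-1\}$ and all $r$, the columns $v^{i,r}_{s|t}$, $\pi^{i,*}_{s|t}(v^{i,r}_{s|t})$ and the entries $J^i_{s|t}(v^{i,r}_{s|t})$. Let $\Lambda^i(x)=\{\lambda\ge0:\mathbf{X}^i\lambda=x,\ \mathbf{1}^\top\lambda=1\}$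 and $Q^i(x)=\min_{\lambda\in\Lambda^i(x)}\mathbf{J}^i\lambda$. LMPC at iteration $j$. For $x\in\mathbb{R}^n$ and $N_t\in\{0,\dots,N\}$, $C^{\mathrm{LMPC},j}_{t\to t+N}(x,N_t)$ is the optimal value ($+\infty$ if infeasible) of: minimize over matrices $M_{ks}$ ($t\le s<k$), vectors $g_k$ and multiplier policies $\lambda_{k|t}$ the cost $\sum_{k=t}^{t+N-1}h(\bar x_{k|t},\pi_{k|t}(\bar x_{k|t}))+Q^{j-1}(\bar x_{t+N|t})$ subject to $x_{t|t}=\bar x_{t|t}=x$; $\bar x_{k+1|t}=A\bar x_{k|t}+B\pi_{k|t}(\bar x_{k|t})$; $x_{k+1|t}=Ax_{k|t}+B\pi_{k|t}(x_{k|t})+w_{k|t}$; $x_{k|t}\in\mathcal{X}$, $\pi_{k|t}(x_{k|t})\in\mathcal{U}$; $x_{t+N|t}\in\mathcal{CS}^{j-1}$; for $k\in\{t,\dots,t+N_t-1\}$, $\pi_{k|t}=\sum_{s=t}^{k-1}M_{ks}w_{s|t}+g_k$ (disturbance feedback); for $k\in\{t+N_t,\dots,t+N-1\}$, $\pi_{k|t}(x_{k|t})=\mathbf{U}^{j-1}\lambda_{k|t}$ with $\lambda_{k|t}\in\Lambda^{j-1}(x_{k|t})$; all for all $w_{k|t}\in\mathcal{W}$, $k=t,\dots,t+N-1$. At state $x^j_t$ one takes $N^{j,*}_t$ minimizing $C^{\mathrm{LMPC},j}_{t\to t+N}(x^j_t,\cdot)$, lets $\boldsymbol{\pi}^{j,*}_t=[\pi^{j,*}_{t|t},\dots,\pi^{j,*}_{t+N-1|t}]$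 be the corresponding optimal policy, and applies $u^j_t=\pi^{j,*}_{t|t}(x^j_t)$. The set $\mathcal{C}^j=\{x:\exists N_0\in\{0,\dots,N\},\ C^{\mathrm{LMPC},j}_{0\to N}(x,N_0)<\infty\}$.
   Formalization: The gain K is also input-admissible on the terminal set: Kx ∈ 𝒰 for every x ∈ 𝒪, so K𝒪 ⊆ 𝒰. The statement above fails without it. *)

From HB Require Import structures.
From mathcomp Require Import all_boot all_order all_algebra.
From mathcomp Require Import all_classical all_reals all_analysis.
Set Implicit Arguments. Unset Strict Implicit. Unset Printing Implicit Defensive.
Import Order.TTheory GRing.Theory Num.Theory.
Import numFieldNormedType.Exports.
Local Open Scope classical_set_scope.
Local Open Scope ring_scope.

Definition cvx_set {R : realType} {n : nat} (S : set 'cV[R]_n) : Prop :=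
  forall (x y : 'cV[R]_n) (th : R), S x -> S y -> 0 <= th <= 1 ->
    S (th *: x + (1 - th) *: y).

Definition conv_hull {R : realType} {n : nat} (S : set 'cV[R]_n) : set 'cV[R]_n :=
  [set x | exists (k : nat) (mu : nat -> R) (p : nat -> 'cV[R]_n),
     (forall i, (i < k)%N -> S (p i) /\ 0 <= mu i) /\
     \sum_(i < k) mu i = 1 /\ x = \sum_(i < k) mu i *: p i].

Definition pts_of {R : realType} {n : nat} (s : seq 'cV[R]_n) : set 'cV[R]_n :=
  [set v | v \in s].

Definition extreme_point {R : realType} {n : nat} (v : 'cV[R]_n) (S : set 'cV[R]_n)
  : Prop :=
  S v /\ forall (a b : 'cV[R]_n) (th : R), S a -> S b -> 0 < th < 1 ->
    v = th *: a + (1 - th) *: b -> a = v /\ b = v.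

Definition polytope_with_vertices {R : realType} {n : nat}
  (P : set 'cV[R]_n) (vs : seq 'cV[R]_n) : Prop :=
  P = conv_hull (pts_of vs) /\ forall v, v \in vs -> extreme_point v P.

Definition norm2 {R : realType} {n : nat} (x : 'cV[R]_n) : R :=
  Num.sqrt (\sum_(i < n) (x i ord0) ^+ 2).

Definition dist_set {R : realType} {n : nat} (x : 'cV[R]_n) (S : set 'cV[R]_n) : R :=
  inf [set norm2 (x - y) | y in S].

Definition Kinf {R : realType} (a : R -> R) : Prop :=
  a 0 = 0 /\ {within [set x : R | 0 <= x], continuous a} /\
  (forall x y : R, 0 <= x -> x < y -> a x < a y) /\
  (forall M : R, exists r : R, 0 <= r /\ M < a r).

Definition jointly_convex {R : realType} {n d : nat}
  (h : 'cV[R]_n -> 'cV[R]_d -> R) : Prop :=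
  forall x1 x2 u1 u2 (th : R), 0 <= th <= 1 ->
    h (th *: x1 + (1 - th) *: x2) (th *: u1 + (1 - th) *: u2)
      <= th * h x1 u1 + (1 - th) * h x2 u2.

Record sysdata (R : realType) (n d : nat) := SysData {
  sA : 'M[R]_n;
  sB : 'M[R]_(n, d);
  sW : set 'cV[R]_n;
  sK : 'M[R]_(d, n);
  svo : seq 'cV[R]_n;
  sN : nat;
  sh : 'cV[R]_n -> 'cV[R]_d -> R
}.

Definition Oset {R : realType} {n d} (S : sysdata R n d) : set 'cV[R]_n :=
  conv_hull (pts_of (svo S)).

(* Stored data of iterations i = 1, ..., j-1.  Time indices are absolute
   for the trajectories; for the N-step policies and the reachable sets
   the step index k is relative: hpol i t k = pi^{i,*}_{t+k|t},
   hvert i t k = list of vertices of R^i_{t -> t+k}. *)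
Record histdata (R : realType) (n d : nat) := HistData {
  hT : nat -> nat;
  hx : nat -> nat -> 'cV[R]_n;
  hw : nat -> nat -> 'cV[R]_n;
  hpol : nat -> nat -> nat -> 'cV[R]_n -> 'cV[R]_d;
  hvert : nat -> nat -> nat -> seq 'cV[R]_n
}.

Section Construction.
Local Open Scope ring_scope.

(* predicted closed loop of a state-feedback policy sequence pol k = pi_{t+k|t},
   from x0 = x_{t|t}, with disturbances ws k = w_{t+k|t} *)
Fixpoint ptraj {R : realType} {n d} (S : sysdata R n d)
  (pol : nat -> 'cV[R]_n -> 'cV[R]_d) (x0 : 'cV[R]_n) (ws : nat -> 'cV[R]_n)
  (k : nat) : 'cV[R]_n :=
  match k with
  | 0 => x0
  | k'.+1 => let x := ptraj S pol x0 ws k' in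
             sA S *m x + sB S *m pol k' x + ws k'
  end.

Fixpoint reach {R : realType} {n d} (S : sysdata R n d)
  (pol : nat -> 'cV[R]_n -> 'cV[R]_d) (x0 : 'cV[R]_n) (k : nat) : set 'cV[R]_n :=
  match k with
  | 0 => [set x0]
  | k'.+1 => [set z | exists x w, reach S pol x0 k' x /\ sW S w /\
                                  z = sA S *m x + sB S *m pol k' x + w]
  end.

Fixpoint CSset {R : realType} {n d} (S : sysdata R n d) (H : histdata R n d)
  (i : nat) : set 'cV[R]_n :=
  match i with
  | 0 => Oset S
  | i'.+1 =>
      conv_hull
        ([set x | exists t k, (t <= hT H i'.+1)%N /\ (k <= sN S)%N /\
                    reach S (hpol H i'.+1 t) (hx H i'.+1 t) k x]
         `|` CSset S H i')
  end.

(* A data column: (column of X^i, column of U^i, entry of J^i) *)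
Definition col (R : realType) (n d : nat) : Type :=
  ('cV[R]_n * 'cV[R]_d * \bar R)%type.

Definition col0 {R : realType} {n d} : col R n d := (0, 0, 0%E).

Definition Lam {R : realType} {n d} (D : seq (col R n d)) (x : 'cV[R]_n)
  : set (nat -> R) :=
  [set lam | (forall q, (q < size D)%N -> 0 <= lam q) /\
             \sum_(q < size D) lam q *: (nth col0 D q).1.1 = x /\
             \sum_(q < size D) lam q = 1].

Definition Uof {R : realType} {n d} (D : seq (col R n d)) (lam : nat -> R)
  : 'cV[R]_d :=
  \sum_(q < size D) lam q *: (nth col0 D q).1.2.

(* Q^i(x) = min_{lambda in Lambda^i(x)} J^i lambda  (+oo if infeasible) *)
Definition Qfun {R : realType} {n d} (D : seq (col R n d)) (x : 'cV[R]_n) : \bar R :=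
  ereal_inf [set (\sum_(q < size D) (lam q)%:E * (nth col0 D q).2)%E
            | lam in Lam D x].

(* Backward cost-to-go at a stored time t of iteration i.
   Jrem m v = J^i_{t+(N-m)|t}(v); Jrem 0 = Q^{i-1}. *)
Fixpoint Jrem {R : realType} {n d} (S : sysdata R n d)
  (Qprev : 'cV[R]_n -> \bar R) (pol : nat -> 'cV[R]_n -> 'cV[R]_d)
  (vt : nat -> seq 'cV[R]_n) (m : nat) : 'cV[R]_n -> \bar R :=
  match m with
  | 0 => Qprev
  | m'.+1 => fun v =>
      let k := (sN S - m'.+1)%N in
      let nxt := vt k.+1 in
      ereal_inf
        [set ((sh S v (pol k v))%:E +
              \sum_(q < size nxt) (gam q)%:E * Jrem S Qprev pol vt m' (nth (0%R : 'cV[R]_n) nxt q))%E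
        | gam in [set gam : nat -> R |
                   (forall q, (q < size nxt)%N -> 0 <= gam q) /\
                   \sum_(q < size nxt) gam q *: nth 0 nxt q
                     = sA S *m v + sB S *m pol k v /\
                   \sum_(q < size nxt) gam q = 1]]
  end.

Definition Jval {R : realType} {n d} (S : sysdata R n d) (H : histdata R n d)
  (Qprev : 'cV[R]_n -> \bar R) (i t k : nat) : 'cV[R]_n -> \bar R :=
  Jrem S Qprev (hpol H i t) (hvert H i t) (sN S - k).

Definition newcols {R : realType} {n d} (S : sysdata R n d) (H : histdata R n d)
  (Qprev : 'cV[R]_n -> \bar R) (i : nat) : seq (col R n d) :=
  flatten [seq flatten [seq [seq (v, hpol H i t k v, Jval S H Qprev i t k v)
                            | v <- hvert H i t k]
                       | k <- iota 0 (sN S)]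
          | t <- iota 0 (hT H i).+1].

Fixpoint data {R : realType} {n d} (S : sysdata R n d) (H : histdata R n d)
  (i : nat) : seq (col R n d) :=
  match i with
  | 0 => [seq (v, sK S *m v, 0%E) | v <- svo S]
  | i'.+1 => data S H i' ++ newcols S H (Qfun (data S H i')) i'.+1
  end.

(* decision variables: M k s (s < k), g k, multiplier policies lam k *)
Record lmpcsol (R : realType) (n d : nat) := LmpcSol {
  solM : nat -> nat -> 'M[R]_(d, n);
  solg : nat -> 'cV[R]_d;
  sollam : nat -> 'cV[R]_n -> (nat -> R)
}.

Definition sol_input {R : realType} {n d} (D : seq (col R n d)) (Nt : nat)
  (s : lmpcsol R n d) (ws : nat -> 'cV[R]_n) (k : nat) (xk : 'cV[R]_n) : 'cV[R]_d :=
  if (k < Nt)%N then \sum_(s0 < k) solM s k s0 *m ws s0 + solg s k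
  else Uof D (sollam s k xk).

Fixpoint spred {R : realType} {n d} (S : sysdata R n d) (D : seq (col R n d))
  (Nt : nat) (s : lmpcsol R n d) (x : 'cV[R]_n) (ws : nat -> 'cV[R]_n) (k : nat)
  : 'cV[R]_n :=
  match k with
  | 0 => x
  | k'.+1 => let xk := spred S D Nt s x ws k' in
             sA S *m xk + sB S *m sol_input D Nt s ws k' xk + ws k'
  end.

Definition lmpc_feasible {R : realType} {n d} (S : sysdata R n d)
  (X : set 'cV[R]_n) (U : set 'cV[R]_d) (CSp : set 'cV[R]_n)
  (D : seq (col R n d)) (x : 'cV[R]_n) (Nt : nat) (s : lmpcsol R n d) : Prop :=
  forall ws : nat -> 'cV[R]_n, (forall k, (k < sN S)%N -> sW S (ws k)) ->
    (forall k, (k < sN S)%N ->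
        X (spred S D Nt s x ws k) /\
        U (sol_input D Nt s ws k (spred S D Nt s x ws k))) /\
    CSp (spred S D Nt s x ws (sN S)) /\
    (forall k, (Nt <= k < sN S)%N ->
        Lam D (spred S D Nt s x ws k) (sollam s k (spred S D Nt s x ws k))).

Definition lmpc_cost {R : realType} {n d} (S : sysdata R n d)
  (D : seq (col R n d)) (x : 'cV[R]_n) (Nt : nat) (s : lmpcsol R n d) : \bar R :=
  let ws0 := fun _ : nat => (0 : 'cV[R]_n) in
  ((\sum_(k < sN S) sh S (spred S D Nt s x ws0 k)
                         (sol_input D Nt s ws0 k (spred S D Nt s x ws0 k)))%:E
   + Qfun D (spred S D Nt s x ws0 (sN S)))%E.

(* C^{LMPC,j}_{t -> t+N}(x, Nt) at iteration j (+oo if infeasible) *)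
Definition Clmpc {R : realType} {n d} (S : sysdata R n d) (H : histdata R n d)
  (X : set 'cV[R]_n) (U : set 'cV[R]_d) (j : nat) (x : 'cV[R]_n) (Nt : nat)
  : \bar R :=
  ereal_inf [set lmpc_cost S (data S H j.-1) x Nt s
            | s in [set s | lmpc_feasible S X U (CSset S H j.-1) (data S H j.-1) x Nt s]].

Definition Cset {R : realType} {n d} (S : sysdata R n d) (H : histdata R n d)
  (X : set 'cV[R]_n) (U : set 'cV[R]_d) (j : nat) : set 'cV[R]_n :=
  [set x | exists N0, (N0 <= sN S)%N /\ (Clmpc S H X U j x N0 < +oo)%E].

Definition applied_input {R : realType} {n d} (S : sysdata R n d) (H : histdata R n d)
  (j : nat) (Nt : nat) (s : lmpcsol R n d) (x : 'cV[R]_n) : 'cV[R]_d :=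
  sol_input (data S H j.-1) Nt s (fun _ => 0) 0 x.

End Construction.

(* Every column (x, u, J) of the data matrices of
   iteration j-1 satisfies x \in X, u \in U, A x + B u + w \in CS^{j-1} for all
   w \in W, and J < +oo: for the columns built from O this is the invariance of
   O under K, for the stored vertices of R^i_{t->s} it is the standing
   assumption on iteration i.  As X, U and CS^{j-1} are convex, the same holds
   for every convex combination of columns, and CS^{j-1} lies in the convex hull
   of the stored states, so the multiplier policy U^{j-1} lambda keeps CS^{j-1}
   robustly invariant.  Shifting a feasible solution at x^j_t by one step, with
   the realized w^j_t absorbed into the offsets and the multiplier policy
   appended, gives a feasible solution at x^j_{t+1} of finite cost.  Hence
   x^j_t \in C^j for all t, and the constraints at time t are those of the first
   predicted step. *)

From Pilot Require Import Defs.
From HB Require Import structures.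
From mathcomp Require Import all_boot all_order all_algebra.
From mathcomp Require Import all_classical all_reals all_analysis.
From mathcomp Require Import lra zify.
Set Implicit Arguments. Unset Strict Implicit. Unset Printing Implicit Defensive.
Import Order.TTheory GRing.Theory Num.Theory.
Import numFieldNormedType.Exports.
Local Open Scope classical_set_scope.
Local Open Scope ring_scope.

Section ConvexCombinations.
Variables (R : realType) (n : nat).
Implicit Types (C P : set 'cV[R]_n) (f : nat -> 'cV[R]_n).

Definition convex_combs (m : nat) f : set 'cV[R]_n :=
  [set z | exists gam : nat -> R, (forall q, (q < m)%N -> 0 <= gam q) /\
     \sum_(q < m) gam q *: f q = z /\ \sum_(q < m) gam q = 1].

Lemma cvx_convex_combs m f : cvx_set (convex_combs m f).
Proof.
move=> _ _ th [g1 [g1_ge0 [<- g1_sum]]] [g2 [g2_ge0 [<- g2_sum]]] /andP[th_ge0 th_le1].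
exists (fun q => th * g1 q + (1 - th) * g2 q); split; [|split].
- by move=> q lt_qm; rewrite addr_ge0 ?mulr_ge0 ?subr_ge0 ?g1_ge0 ?g2_ge0.
- by rewrite !scaler_sumr -big_split; apply: eq_bigr => q _; rewrite scalerDl !scalerA.
- rewrite big_split -!mulr_sumr g1_sum g2_sum !mulr1; exact: subrKC.
Qed.

Lemma convex_combs_pt m f q : (q < m)%N -> convex_combs m f (f q).
Proof.
move=> lt_qm; exists (fun i => (i == q)%:R); split; [|split].
- by move=> i _; rewrite ler0n.
- rewrite (bigD1 (Ordinal lt_qm)) //= eqxx scale1r big1 ?addr0 // => i.
  by rewrite -val_eqE /= => /negbTE ->; rewrite scale0r.
- rewrite (bigD1 (Ordinal lt_qm)) //= eqxx big1 ?addr0 // => i.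
  by rewrite -val_eqE /= => /negbTE ->.
Qed.

Lemma convex_combs_sub C m f :
  cvx_set C -> (forall q, (q < m)%N -> C (f q)) -> convex_combs m f `<=` C.
Proof.
move=> cvxC; elim: m f => [|m IH] f Cf _ [g [g_ge0 [<-]]].
  by rewrite big_ord0 => /eqP; rewrite eq_sym oner_eq0.
rewrite !big_ord_recr /= => g_sum.
have gm_ge0 : 0 <= g m by exact: g_ge0.
have head_ge0 : 0 <= \sum_(i < m) g i.
  by apply: sumr_ge0 => i _; apply: g_ge0; exact: leqW.
have [gm1|gm_neq1] := eqVneq (g m) 1.
  have head0 : forall i : 'I_m, g i = 0.
    move=> i; apply: (psumr_eq0P (P := xpredT) (F := fun i : 'I_m => g i)) => //=.
      by move=> k _; apply: g_ge0; exact: leqW.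
    lra.
  rewrite big1 ?add0r ?gm1 ?scale1r; first exact: Cf.
  by move=> i _; rewrite head0 scale0r.
have gm_lt1 : 0 < 1 - g m by rewrite subr_gt0 lt_neqAle gm_neq1; lra.
have head_sum : \sum_(i < m) g i = 1 - g m by lra.
have Chead : C (\sum_(i < m) (g i / (1 - g m)) *: f i).
  apply: (IH f) => [q lt_qm|]; first by apply: Cf; exact: leqW.
  exists (fun i => g i / (1 - g m)); split; [|split] => //.
    by move=> q lt_qm; apply: divr_ge0; [apply: g_ge0; exact: leqW|exact: ltW].
  by rewrite -mulr_suml head_sum divff // gt_eqF.
have gm_le1 : g m <= 1 by lra.
have := cvxC _ _ (g m) (Cf m (ltnSn m)) Chead; rewrite gm_ge0 gm_le1 => /(_ isT).
rewrite scaler_sumr addrC; congr C; congr (_ + _); apply: eq_bigr => i _.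
by rewrite scalerA mulrC divfK // gt_eqF.
Qed.

Lemma sub_conv_hull P : P `<=` conv_hull P.
Proof.
move=> x Px; exists 1%N, (fun _ => 1), (fun _ => x).
by rewrite !big_ord1 scale1r.
Qed.

Lemma conv_hull_sub C P : cvx_set C -> P `<=` C -> conv_hull P `<=` C.
Proof.
move=> cvxC PC _ [k [mu [p [Pp [mu_sum ->]]]]].
have Cp : forall q, (q < k)%N -> C (p q) by move=> q /Pp [/PC].
apply: (convex_combs_sub cvxC Cp).
by exists mu; split=> // q /Pp [].
Qed.

Lemma cvx_conv_hull P : cvx_set (conv_hull P).
Proof.
move=> _ _ th [k1 [mu1 [p1 [Pp1 [mu1_sum ->]]]]] [k2 [mu2 [p2 [Pp2 [mu2_sum ->]]]]].
move=> /andP[th_ge0 th_le1].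
pose glue T (a b : nat -> T) i := if (i < k1)%N then a i else b (i - k1)%N.
exists (k1 + k2)%N, (glue _ (fun i => th * mu1 i) (fun i => (1 - th) * mu2 i)).
exists (glue _ p1 p2).
rewrite /glue; split; [|split].
- move=> i lt_i; case: ifP => lt_ik1.
    by have [? ?] := Pp1 i lt_ik1; split=> //; apply: mulr_ge0.
  have lt_ik2 : (i - k1 < k2)%N by rewrite ltn_subLR // leqNgt lt_ik1.
  by have [? ?] := Pp2 _ lt_ik2; split=> //; apply: mulr_ge0; rewrite ?subr_ge0.
- rewrite big_split_ord /=.
  rewrite (eq_bigr (fun i : 'I_k1 => th * mu1 i)) => [|i _]; last by rewrite ltn_ord.
  rewrite (eq_bigr (fun i : 'I_k2 => (1 - th) * mu2 i)) => [|i _]; last first.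
    by rewrite ltnNge leq_addr /= addKn.
  by rewrite -!mulr_sumr mu1_sum mu2_sum !mulr1 subrKC.
- rewrite big_split_ord /= !scaler_sumr; congr (_ + _); apply: eq_bigr => i _.
    by rewrite ltn_ord scalerA.
  by rewrite ltnNge leq_addr /= addKn scalerA.
Qed.

Lemma polytope_vertex P vs v : polytope_with_vertices P vs -> v \in vs -> P v.
Proof. by case=> _ vert /vert []. Qed.

Lemma polytope_convex_combs P vs :
  polytope_with_vertices P vs -> P `<=` convex_combs (size vs) (nth 0 vs).
Proof.
case=> -> _; apply: conv_hull_sub; first exact: cvx_convex_combs.
move=> v vs_v; rewrite -(nth_index 0 vs_v).
by apply: convex_combs_pt; rewrite index_mem.
Qed.

End ConvexCombinations.

Lemma lte_wsum_pinfty (R : realType) m (g : nat -> R) (e : nat -> \bar R) :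
  (forall q, (q < m)%N -> 0 <= g q) -> (forall q, (q < m)%N -> (e q < +oo)%E) ->
  (\sum_(q < m) (g q)%:E * e q < +oo)%E.
Proof.
elim: m => [|m IH] g_ge0 e_fin; first by rewrite big_ord0 ltry.
rewrite big_ord_recr /=; apply: lte_add_pinfty.
  by apply: IH => q lt_qm; [apply: g_ge0|apply: e_fin]; exact: ltnW.
by apply: lte_mul_pinfty; rewrite ?lee_fin ?g_ge0 ?e_fin.
Qed.

Section ReachableSets.
Variables (R : realType) (n d : nat) (S : sysdata R n d).
Hypothesis W0 : sW S 0.

Lemma ptraj_ext pol x0 ws ws' k :
  (forall i, (i < k)%N -> ws i = ws' i) -> ptraj S pol x0 ws k = ptraj S pol x0 ws' k.
Proof.
elim: k => [//|k IH] eq_ws /=.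
by rewrite IH ?eq_ws // => i lt_ik; apply: eq_ws; exact: ltnW.
Qed.

Lemma reach_ptraj pol x0 k v :
  reach S pol x0 k v -> exists ws, (forall i, sW S (ws i)) /\ v = ptraj S pol x0 ws k.
Proof.
elim: k v => [v -> |k IH _ [x [w [reach_x [Ww ->]]]]]; first by exists (fun=> 0).
have [ws [Wws ->]] := IH x reach_x.
exists (fun i => if i == k then w else ws i); split=> [i|/=]; first by case: (i == k).
rewrite eqxx (ptraj_ext _ _ (ws' := ws)) // => i lt_ik.
by rewrite (ltn_eqF lt_ik).
Qed.

Lemma reach_nominal pol x0 k v :
  reach S pol x0 k v -> reach S pol x0 k.+1 (sA S *m v + sB S *m pol k v).
Proof. by move=> reach_v; exists v, 0; rewrite addr0. Qed.

(* The nominal successor of a vertex of R_{t->s} lies in R_{t->s+1} (as 0 is in W),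
   so it is a convex combination of the vertices of R_{t->s+1}. *)
Lemma Jrem_lt_pinfty Qprev pol x0 vt :
  (forall k, (k <= sN S)%N -> polytope_with_vertices (reach S pol x0 k) (vt k)) ->
  (forall v, v \in vt (sN S) -> (Qprev v < +oo)%E) ->
  forall m, (m <= sN S)%N -> forall v, v \in vt (sN S - m)%N ->
    (Jrem S Qprev pol vt m v < +oo)%E.
Proof.
move=> vt_vert Q_fin; elim=> [|m IH] le_mN v; first by rewrite subn0; exact: Q_fin.
move=> vt_v /=; set k := (sN S - m.+1)%N.
have k1E : k.+1 = (sN S - m)%N by rewrite subnSK.
have le_k1N : (k.+1 <= sN S)%N by rewrite k1E leq_subr.
have reach_v := polytope_vertex (vt_vert k (ltnW le_k1N)) vt_v.
have [gam gam_comb] :=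
  polytope_convex_combs (vt_vert _ le_k1N) (reach_nominal reach_v).
apply: le_lt_trans; first by apply: ereal_inf_lbound; exists gam.
apply: lte_add_pinfty; first exact: ltry.
case: gam_comb => gam_ge0 _.
apply: (lte_wsum_pinfty (g := gam)
  (e := fun q => Jrem S Qprev pol vt m (nth 0 (vt k.+1) q))) => // q lt_q.
by apply: IH; [exact: ltnW|rewrite -k1E mem_nth].
Qed.

End ReachableSets.

Section DataColumns.
Variables (R : realType) (n d : nat).
Implicit Types (D : seq (Defs.col R n d)).

Definition col_states D : set 'cV[R]_n :=
  convex_combs (size D) (fun q => (nth Defs.col0 D q).1.1).

Lemma col_states_Lam D x : col_states D x -> exists lam, Lam D x lam.
Proof. by []. Qed.

Lemma col_states_mem D c : c \in D -> col_states D c.1.1.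
Proof.
by move=> Dc; rewrite -(nth_index Defs.col0 Dc); apply: convex_combs_pt; rewrite index_mem.
Qed.

Lemma col_states_subset D1 D2 : {subset D1 <= D2} -> col_states D1 `<=` col_states D2.
Proof.
move=> sub_D; apply: convex_combs_sub; first exact: cvx_convex_combs.
by move=> q lt_q; apply/col_states_mem/sub_D; exact: mem_nth.
Qed.

Lemma Qfun_lt_pinfty D x :
  (forall c, c \in D -> (c.2 < +oo)%E) -> col_states D x -> (Qfun D x < +oo)%E.
Proof.
move=> J_fin /col_states_Lam [lam Lam_lam].
apply: le_lt_trans; first by apply: ereal_inf_lbound; exists lam.
case: Lam_lam => lam_ge0 _.
apply: (lte_wsum_pinfty (g := lam) (e := fun q => (nth Defs.col0 D q).2)) => // q lt_q.
by apply: J_fin; exact: mem_nth.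
Qed.

Definition safe_pair (S : sysdata R n d) (X : set 'cV[R]_n) (U : set 'cV[R]_d)
    (T : set 'cV[R]_n) (x : 'cV[R]_n) (u : 'cV[R]_d) : Prop :=
  X x /\ U u /\ forall w, sW S w -> T (sA S *m x + sB S *m u + w).

Lemma Lam_safe_pair S X U T D y lam :
  cvx_set X -> cvx_set U -> cvx_set T ->
  (forall c, c \in D -> safe_pair S X U T c.1.1 c.1.2) ->
  Lam D y lam -> safe_pair S X U T y (Uof D lam).
Proof.
move=> cvxX cvxU cvxT D_safe [lam_ge0 [yE lam_sum]].
pose xs q := (nth Defs.col0 D q).1.1; pose us q := (nth Defs.col0 D q).1.2.
have safe_q q : (q < size D)%N -> safe_pair S X U T (xs q) (us q).
  by move=> /(mem_nth Defs.col0) /D_safe.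
have comb k (C : set 'cV[R]_k) f : cvx_set C -> (forall q, (q < size D)%N -> C (f q)) ->
    C (\sum_(q < size D) lam q *: f q).
  by move=> cvxC Cf; apply: (convex_combs_sub cvxC Cf); exists lam.
split; [|split].
- by rewrite -yE; apply: (comb _ _ xs) => // q /safe_q [].
- by apply: (comb _ _ us) => // q /safe_q [_ []].
move=> w Ww.
have -> : sA S *m y + sB S *m Uof D lam + w =
    \sum_(q < size D) lam q *: (sA S *m xs q + sB S *m us q + w).
  under eq_bigr do rewrite !scalerDr.
  rewrite !big_split /= -scaler_suml lam_sum scale1r -yE /Uof !mulmx_sumr.
  by congr (_ + _ + _); apply: eq_bigr => q _; rewrite scalemxAr.
apply: (comb _ _ (fun q => sA S *m xs q + sB S *m us q + w)) => // q.
by case/safe_q => _ [_ /(_ w Ww)].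
Qed.

End DataColumns.

Section ShiftedSolution.
Variables (R : realType) (n d : nat) (S : sysdata R n d).
Variables (X : set 'cV[R]_n) (U : set 'cV[R]_d) (CSp : set 'cV[R]_n).
Variables (D : seq (Defs.col R n d)) (x w0 : 'cV[R]_n) (Nt : nat) (s : lmpcsol R n d).
Variable fsel : 'cV[R]_n -> nat -> R.

(* The realized disturbance w0 is absorbed into the offsets g; the last step
   switches to the multiplier policy fsel. *)
Definition shift_sol : lmpcsol R n d :=
  LmpcSol (fun k i => solM s k.+1 i.+1) (fun k => solg s k.+1 + solM s k.+1 0 *m w0)
    (fun k y => if (k.+1 < sN S)%N then sollam s k.+1 y else fsel y).

Definition cons_dist (ws : nat -> 'cV[R]_n) (i : nat) : 'cV[R]_n :=
  if i is i'.+1 then ws i' else w0.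

Lemma sol_input_first ws ws' y : sol_input D Nt s ws 0 y = sol_input D Nt s ws' 0 y.
Proof. by rewrite /sol_input; case: ifP => // _; rewrite !big_ord0. Qed.

Lemma sol_input_shift ws k y : (k.+1 < sN S)%N ->
  sol_input D Nt.-1 shift_sol ws k y = sol_input D Nt s (cons_dist ws) k.+1 y.
Proof.
move=> lt_k1N; rewrite /sol_input /= ltn_predRL; case: ifP => _ /=; last by rewrite lt_k1N.
by rewrite big_ord_recl /= addrA [_ + solM _ _ _ *m _]addrC addrA.
Qed.

Lemma spred_shift ws k : (k < sN S)%N ->
  spred S D Nt.-1 shift_sol (sA S *m x + sB S *m sol_input D Nt s (fun=> 0) 0 x + w0) ws k
  = spred S D Nt s x (cons_dist ws) k.+1.
Proof.
elim: k => [_|k IH lt_k1N] /=; first by rewrite (sol_input_first _ (cons_dist ws)).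
by rewrite IH ?sol_input_shift // ltnW.
Qed.

Hypotheses (N_gt0 : (0 < sN S)%N) (le_NtN : (Nt <= sN S)%N) (Ww0 : sW S w0).
Hypothesis fsel_safe :
  forall y, CSp y -> Lam D y (fsel y) /\ safe_pair S X U CSp y (Uof D (fsel y)).

Lemma shift_sol_feasible :
  lmpc_feasible S X U CSp D x Nt s ->
  lmpc_feasible S X U CSp D (sA S *m x + sB S *m sol_input D Nt s (fun=> 0) 0 x + w0)
    Nt.-1 shift_sol.
Proof.
move=> feas ws Wws.
have Wcons k : (k < sN S)%N -> sW S (cons_dist ws k) by case: k => //= k /ltnW/Wws.
have [XU_old [CS_old Lam_old]] := feas _ Wcons.
set x' := sA S *m x + _ + w0.
set y := spred S D Nt s x (cons_dist ws) (sN S).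
have [Lam_y [Xy [Uy CS_succ]]] := fsel_safe CS_old.
have lastE : (sN S).-1.+1 = sN S by rewrite prednK.
have spred_last : spred S D Nt.-1 shift_sol x' ws (sN S).-1 = y.
  by rewrite spred_shift ?lastE // ltn_predL.
have input_last : sol_input D Nt.-1 shift_sol ws (sN S).-1 y = Uof D (fsel y).
  by rewrite /sol_input /= ltn_predRL lastE ltnNge le_NtN /= ltnn.
split; [|split].
- move=> k lt_kN; have [lt_k1N|] := ltnP k.+1 (sN S).
    by rewrite spred_shift // sol_input_shift //; apply: XU_old.
  move=> le_Nk1; have -> : k = (sN S).-1 by lia.
  by rewrite spred_last input_last.
- by rewrite -lastE /= spred_last input_last; apply/CS_succ/Wws; rewrite ltn_predL.
- move=> k /andP[le_Nt1k lt_kN]; have [lt_k1N|] := ltnP k.+1 (sN S).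
    rewrite spred_shift //= lt_k1N; apply: Lam_old; rewrite lt_k1N andbT.
    exact: leq_trans (leqSpred Nt) _.
  move=> le_Nk1; have -> : k = (sN S).-1 by lia.
  by rewrite spred_last /= lastE ltnn.
Qed.

End ShiftedSolution.

Section StoredData.
Variables (R : realType) (n d : nat) (S : sysdata R n d) (H : histdata R n d).
Variables (X : set 'cV[R]_n) (U : set 'cV[R]_d) (j : nat).

Lemma newcols_inv Q i c : c \in newcols S H Q i ->
  exists t k v, [/\ (t <= hT H i)%N, (k < sN S)%N, v \in hvert H i t k &
                    c = (v, hpol H i t k v, Jval S H Q i t k v)].
Proof.
case/flatten_mapP => t; rewrite mem_iota add0n ltnS => /andP[_ le_tT].
case/flatten_mapP => k; rewrite mem_iota add0n => /andP[_ lt_kN].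
by case/mapP => v vt_v ->; exists t, k, v.
Qed.

Lemma mem_newcols Q i t k v :
  (t <= hT H i)%N -> (k < sN S)%N -> v \in hvert H i t k ->
  (v, hpol H i t k v, Jval S H Q i t k v) \in newcols S H Q i.
Proof.
move=> le_tT lt_kN vt_v; apply/flatten_mapP; exists t; first by rewrite mem_iota ltnS.
by apply/flatten_mapP; exists k; [rewrite mem_iota|apply/mapP; exists v].
Qed.

Lemma CSset_subS i : CSset S H i `<=` CSset S H i.+1.
Proof. by move=> x CSx; apply: sub_conv_hull; right. Qed.

Lemma cvx_CSset i : cvx_set (CSset S H i).
Proof. by case: i => [|i]; apply: cvx_conv_hull. Qed.

Lemma CSset_reach i t k x : (t <= hT H i.+1)%N -> (k <= sN S)%N ->
  reach S (hpol H i.+1 t) (hx H i.+1 t) k x -> CSset S H i.+1 x.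
Proof. by move=> le_tT le_kN reach_x; apply: sub_conv_hull; left; exists t, k. Qed.

Definition stored_data_ok : Prop :=
  forall i, (0 < i < j)%N ->
     (forall t, (t < hT H i)%N ->
        sW S (hw H i t) /\
        hx H i t.+1 = sA S *m hx H i t + sB S *m hpol H i t 0 (hx H i t) + hw H i t) /\
     (forall t, (t <= hT H i)%N ->
        forall ws : nat -> 'cV[R]_n, (forall k, (k < sN S)%N -> sW S (ws k)) ->
          (forall k, (k < sN S)%N ->
             X (ptraj S (hpol H i t) (hx H i t) ws k) /\
             U (hpol H i t k (ptraj S (hpol H i t) (hx H i t) ws k))) /\
          CSset S H i.-1 (ptraj S (hpol H i t) (hx H i t) ws (sN S))) /\
     (forall t k, (t <= hT H i)%N -> (k <= sN S)%N ->
        polytope_with_vertices (reach S (hpol H i t) (hx H i t) k) (hvert H i t k)).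

Hypotheses (W0 : sW S 0) (stored_ok : stored_data_ok).

Lemma reach_horizon_CSset i t x : (0 < i < j)%N -> (t <= hT H i)%N ->
  reach S (hpol H i t) (hx H i t) (sN S) x -> CSset S H i.-1 x.
Proof.
move=> lt_0ij le_tT /(reach_ptraj W0) [ws [Wws ->]].
have [_ [standing _]] := stored_ok lt_0ij.
by have [_ ?] := standing t le_tT ws (fun k _ => Wws k).
Qed.

Lemma CSset_col_states i : (i < j)%N -> CSset S H i `<=` col_states (data S H i).
Proof.
elim: i => [_|i IH lt_i1j] /=.
  apply: conv_hull_sub; first exact: cvx_convex_combs.
  move=> v svo_v; apply: (col_states_mem (c := (v, sK S *m v, 0%E))).
  by apply/mapP; exists v.
have lt_0i1j : (0 < i.+1 < j)%N by rewrite ltn0Sn.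
have [_ [_ vert]] := stored_ok lt_0i1j.
set D := data S H i ++ _.
have old_sub : col_states (data S H i) `<=` col_states D.
  by apply: col_states_subset => c Dc; rewrite mem_cat Dc.
apply: conv_hull_sub; first exact: cvx_convex_combs.
move=> x [[t [k [le_tT [le_kN reach_x]]]]|CSx]; last first.
  exact: old_sub (IH (ltnW lt_i1j) _ CSx).
have [lt_kN|le_Nk] := ltnP k (sN S).
  move: x reach_x; rewrite (proj1 (vert t k le_tT le_kN)).
  apply: conv_hull_sub; first exact: cvx_convex_combs.
  move=> v vt_v; have new_v := mem_newcols (Qfun (data S H i)) le_tT lt_kN vt_v.
  apply: (col_states_mem (c := (v, _, _))).
  by rewrite mem_cat; apply/orP; right; exact: new_v.
have kE : k = sN S by apply/eqP; rewrite eqn_leq le_kN le_Nk.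
rewrite kE in reach_x.
exact: old_sub (IH (ltnW lt_i1j) _ (reach_horizon_CSset lt_0i1j le_tT reach_x)).
Qed.

Definition admissible_col i (c : Defs.col R n d) : Prop :=
  safe_pair S X U (CSset S H i) c.1.1 c.1.2 /\ (c.2 < +oo)%E.

Lemma newcols_admissible i : (i.+1 < j)%N ->
  (forall c, c \in data S H i -> (c.2 < +oo)%E) ->
  forall c, c \in newcols S H (Qfun (data S H i)) i.+1 -> admissible_col i.+1 c.
Proof.
move=> lt_i1j J_fin c /newcols_inv [t [k [v [le_tT lt_kN vt_v ->]]]].
have lt_0i1j : (0 < i.+1 < j)%N by rewrite ltn0Sn.
have [_ [standing vert]] := stored_ok lt_0i1j.
have reach_v := polytope_vertex (vert t k le_tT (ltnW lt_kN)) vt_v.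
have [ws [Wws vE]] := reach_ptraj W0 reach_v.
have [/(_ k lt_kN) [Xv Uv] _] := standing t le_tT ws (fun k _ => Wws k).
rewrite -vE in Xv Uv.
split; first split=> //; first split=> // w Ww.
  by apply: (CSset_reach (k := k.+1) le_tT lt_kN); exists v, w.
have Q_fin v' : v' \in hvert H i.+1 t (sN S) -> (Qfun (data S H i) v' < +oo)%E.
  move=> /(polytope_vertex (vert t _ le_tT (leqnn _))).
  move=> /(reach_horizon_CSset lt_0i1j le_tT) /(CSset_col_states (ltnW lt_i1j)).
  exact: Qfun_lt_pinfty.
rewrite /= /Jval; apply: (Jrem_lt_pinfty W0 (fun k => vert t k le_tT) Q_fin).
  exact: leq_subr.
by rewrite subKn // ltnW.
Qed.

Hypotheses (OX : Oset S `<=` X) (KO_U : [set sK S *m x | x in Oset S] `<=` U).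
Hypothesis O_inv :
  forall x w, Oset S x -> sW S w -> Oset S ((sA S + sB S *m sK S) *m x + w).

Lemma data_admissible i : (i < j)%N -> forall c, c \in data S H i -> admissible_col i c.
Proof.
elim: i => [_ c /mapP [v svo_v ->]|i IH lt_i1j c] /=.
  have Ov : Oset S v by apply: sub_conv_hull.
  split; last exact: ltry.
  split; first exact: OX.
  split; first by apply: KO_U; exists v.
  by move=> w Ww; rewrite mulmxA -mulmxDl; apply: O_inv.
rewrite mem_cat => /orP[old_c|new_c]; last first.
  by apply: newcols_admissible => // c' /(IH (ltnW lt_i1j)) [].
have [[Xc [Uc CSc]] Jc] := IH (ltnW lt_i1j) c old_c.
by split=> //; split=> //; split=> // w /CSc /CSset_subS.
Qed.

Hypotheses (cvxX : cvx_set X) (cvxU : cvx_set U) (j_gt0 : (0 < j)%N).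

Lemma terminal_selector : exists fsel : 'cV[R]_n -> nat -> R,
  forall y, CSset S H j.-1 y ->
    Lam (data S H j.-1) y (fsel y) /\
    safe_pair S X U (CSset S H j.-1) y (Uof (data S H j.-1) (fsel y)).
Proof.
have lt_j1j : (j.-1 < j)%N by rewrite ltn_predL.
set D := data S H j.-1; set CSp := CSset S H j.-1.
suff /choice[fsel fsel_safe] :
    forall y, exists lam, CSp y -> Lam D y lam /\ safe_pair S X U CSp y (Uof D lam).
  by exists fsel.
move=> y; have [CSy|notCSy] := pselect (CSp y); last by exists (fun=> 0) => /notCSy.
have [lam Lam_lam] := col_states_Lam (CSset_col_states lt_j1j CSy).
exists lam => _; split=> //; apply: Lam_safe_pair Lam_lam => //; first exact: cvx_CSset.
by move=> c /(data_admissible lt_j1j) [].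
Qed.

Lemma Cset_succ x Nt s w0 : (0 < sN S)%N -> (Nt <= sN S)%N -> sW S w0 ->
  lmpc_feasible S X U (CSset S H j.-1) (data S H j.-1) x Nt s ->
  Cset S H X U j (sA S *m x + sB S *m applied_input S H j Nt s x + w0).
Proof.
move=> N_gt0 le_NtN Ww0 feas.
have lt_j1j : (j.-1 < j)%N by rewrite ltn_predL.
have [fsel fsel_safe] := terminal_selector.
have feas' := shift_sol_feasible N_gt0 le_NtN Ww0 fsel_safe feas.
exists Nt.-1; split; first exact: leq_trans (leq_pred Nt) le_NtN.
apply: le_lt_trans; first by apply: ereal_inf_lbound; exists (shift_sol S w0 s fsel).
apply: lte_add_pinfty; first exact: ltry.
have [_ [CS_T _]] := feas' (fun=> 0) (fun _ _ => W0).
apply: Qfun_lt_pinfty (CSset_col_states lt_j1j CS_T).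
by move=> c /(data_admissible lt_j1j) [].
Qed.

End StoredData.
Theorem theorem1 (R : realType) (n d : nat) (S : sysdata R n d)
  (H : histdata R n d) (X : set 'cV[R]_n) (U : set 'cV[R]_d)
  (vw : seq 'cV[R]_n) (axl axu aul auu : R -> R) (j : nat)
  (xj wj : nat -> 'cV[R]_n) (Nst : nat -> nat) (sol : nat -> lmpcsol R n d) :
  (* disturbances: compact polytope W with vertices vw, containing 0 *)
  polytope_with_vertices (sW S) vw -> sW S 0 ->
  (* constraints *)
  cvx_set X -> compact X -> X 0 ->
  cvx_set U -> compact U -> U 0 ->
  (* terminal set O and gain K *)
  (forall v, v \in svo S -> extreme_point v (Oset S)) ->
  Oset S `<=` X ->
  (forall x w, Oset S x -> sW S w -> Oset S ((sA S + sB S *m sK S) *m x + w)) ->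
  [set sK S *m x | x in Oset S] `<=` U ->
  (* stage cost *)
  continuous (fun p : 'cV[R]_n * 'cV[R]_d => sh S p.1 p.2) ->
  jointly_convex (sh S) ->
  Kinf axl -> Kinf axu -> Kinf aul -> Kinf auu ->
  (forall x, axl (dist_set x (Oset S)) <= sh S x 0 <= axu (dist_set x (Oset S))) ->
  (forall u, aul (dist_set u [set sK S *m x | x in Oset S]) <= sh S 0 u
             <= auu (dist_set u [set sK S *m x | x in Oset S])) ->
  (* horizon and iteration *)
  (1 <= sN S)%N -> (1 <= j)%N ->
  (* stored data of the previous iterations i = 1, ..., j-1 *)
  (forall i, (0 < i < j)%N ->
     (* closed-loop trajectory *)
     (forall t, (t < hT H i)%N ->
        sW S (hw H i t) /\
        hx H i t.+1 = sA S *m hx H i t + sB S *m hpol H i t 0 (hx H i t) + hw H i t) /\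
     (* standing assumption *)
     (forall t, (t <= hT H i)%N ->
        forall ws : nat -> 'cV[R]_n, (forall k, (k < sN S)%N -> sW S (ws k)) ->
          (forall k, (k < sN S)%N ->
             X (ptraj S (hpol H i t) (hx H i t) ws k) /\
             U (hpol H i t k (ptraj S (hpol H i t) (hx H i t) ws k))) /\
          CSset S H i.-1 (ptraj S (hpol H i t) (hx H i t) ws (sN S))) /\
     (* hvert i t k lists the vertices of R^i_{t -> t+k} *)
     (forall t k, (t <= hT H i)%N -> (k <= sN S)%N ->
        polytope_with_vertices (reach S (hpol H i t) (hx H i t) k) (hvert H i t k))) ->
  (* initial condition *)
  Cset S H X U j (xj 0%N) ->
  (* disturbance realization *)
  (forall t, sW S (wj t)) ->
  (* LMPC closed loop: whenever the problem at x^j_t is feasible, (Nst t, sol t)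
     is an optimal (N^{j,*}_t, policy) and the optimal first input is applied *)
  (forall t, Cset S H X U j (xj t) ->
     [/\ (Nst t <= sN S)%N,
         (forall N0, (N0 <= sN S)%N ->
            (Clmpc S H X U j (xj t) (Nst t) <= Clmpc S H X U j (xj t) N0)%E),
         lmpc_feasible S X U (CSset S H j.-1) (data S H j.-1) (xj t) (Nst t) (sol t),
         lmpc_cost S (data S H j.-1) (xj t) (Nst t) (sol t)
           = Clmpc S H X U j (xj t) (Nst t)
       & xj t.+1 = sA S *m xj t + sB S *m applied_input S H j (Nst t) (sol t) (xj t)
                   + wj t]) ->
  forall t,
    ((Nst t <= sN S)%N /\ (Clmpc S H X U j (xj t) (Nst t) < +oo)%E) /\
    X (xj t) /\ U (applied_input S H j (Nst t) (sol t) (xj t)).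
Proof.
move=> _ W0 cvxX _ _ cvxU _ _ _ OX O_inv KO_U _ _ _ _ _ _ _ _ N_gt0 j_gt0 stored_ok
  C0 Wwj closed_loop.
have feasible t : Cset S H X U j (xj t).
  elim: t => [//|t IH]; have [le_NtN _ feas _ ->] := closed_loop t IH.
  exact: (Cset_succ W0 stored_ok OX KO_U O_inv cvxX cvxU j_gt0 N_gt0 le_NtN (Wwj t) feas).
move=> t; have [le_NtN opt feas _ _] := closed_loop t (feasible t).
have [N0 [le_N0N C_fin]] := feasible t.
split; first by split=> //; exact: le_lt_trans (opt N0 le_N0N) C_fin.
by have [/(_ 0%N N_gt0) []] := feas (fun=> 0) (fun _ _ => W0).
Qed.
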